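(* For every partition $\Sigma$ (of well-founded sets) and every bijection $q\mapsto q^{(\bullet)}$ from a set of places $\mathcal P_\Sigma$ onto $\Sigma$, the $\otimes$-graph $\mathcal G_\Sigma$ induced by $\Sigma$ via this bijection is accessible.
   Context: Sets range over the von Neumann universe of well-founded sets. For sets $s,t$, $s\otimes t=\{\{u,v\} : u\in s,\ v\in t\}$. A partition is a set of pairwise disjoint nonempty sets (blocks). For a set $S$, $\mathrm{Pow}^*_{1,2}(S)=\{t\subseteq\bigcup S : 1\le|t|\le2,\ t\cap s\neq\emptyset\text{ for all }s\in S\}$, and for a family $\mathcal B$, $\mathrm{Pow}^*_{1,2}[\mathcal B]=\{\mathrm{Pow}^*_{1,2}(B):B\in\mathcal B\}$. A subset $\Sigma^*\subseteq\Sigma$ is a $\otimes$-subpartition if $\bigcup\Sigma^*=\bigcup\mathrm{Pow}^*_{1,2}[\mathcal B]$ for some $\mathcal B\subseteq\Sigma\otimes\Sigma$; $\Sigma_\otimes$ is the largest $\otimes$-subpartition and $\Pi_\otimes\subseteq\Sigma\otimes\Sigma$ is the (unique) set with $\bigcup\Sigma_\otimes=\bigcup\mathrm{Pow}^*_{1,2}[\Pi_\otimes]$. A $\otimes$-graph $\mathcal G=(\mathcal P,\mathcal N,\mathcal T)$ consists of a set $\mathcal P$ of places, nodes $\mathcal N=\mathcal P\otimes\mathcal P$ (nonempty subsets of $\mathcal P$ with at most two elements), $\mathcal P\cap\mathcal N=\emptyset$, and a target map $\mathcal T:\mathcal N\to\mathcal P(\mathcal P)$. A source place is a place belonging to no $\mathcal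 T(A)$. The accessible places form the smallest set of places containing all source places and containing $\mathcal T(A)$ whenever all places of the node $A$ belong to it; $\mathcal G$ is accessible if every place is accessible. The $\otimes$-graph induced by $\Sigma$ via a bijection $q\mapsto q^{(\bullet)}$ from $\mathcal P_\Sigma$ (with $\mathcal P_\Sigma\cap(\mathcal P_\Sigma\otimes\mathcal P_\Sigma)=\emptyset$) onto $\Sigma$ has nodes $\mathcal P_\Sigma\otimes\mathcal P_\Sigma$ and, writing $B^{(\bullet)}=\{q^{(\bullet)}:q\in B\}$, target map $\mathcal T_\Sigma(B)=\{q\in\mathcal P_\Sigma : q^{(\bullet)}\in\Sigma_\otimes,\ q^{(\bullet)}\cap\mathrm{Pow}^*_{1,2}(B^{(\bullet)})\neq\emptyset\}$ if $B^{(\bullet)}\in\Pi_\otimes$, and $\mathcal T_\Sigma(B)=\emptyset$ otherwise. *)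

(* Well-founded sets are modelled by Aczel's type of
   well-founded trees (sets-as-trees) with extensional (bisimulation)
   equality; with classical logic this is a model of ZF, i.e. of the
   von Neumann universe of well-founded sets. *)

Inductive V : Type :=
  sup : forall (A : Type), (A -> V) -> V.

Fixpoint eqV (x y : V) {struct x} : Prop :=
  match x, y with
  | sup A f, sup B g =>
      (forall a : A, exists b : B, eqV (f a) (g b)) /\
      (forall b : B, exists a : A, eqV (f a) (g b))
  end.

Definition mem (x y : V) : Prop :=
  match y with sup A f => exists a : A, eqV x (f a) end.

Notation "x '∈' y" := (mem x y) (at level 70, no associativity).

Definition subsetV (s t : V) : Prop := forall z, z ∈ s -> z ∈ t.

Definition mem_union (z S : V) : Prop := exists s, s ∈ S /\ z ∈ s.

(** t = {u, v}  (a singleton when u = v) *)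
Definition is_pair (t u v : V) : Prop :=
  forall z, z ∈ t <-> (eqV z u \/ eqV z v).

Definition partition (S : V) : Prop :=
  (forall s, s ∈ S -> exists x, x ∈ s) /\
  (forall s t, s ∈ S -> t ∈ S -> (exists x, x ∈ s /\ x ∈ t) -> eqV s t).

Definition in_otimes (s t B : V) : Prop :=
  exists u v, u ∈ s /\ v ∈ t /\ is_pair B u v.

Definition in_Pow12 (S t : V) : Prop :=
  (forall z, z ∈ t -> mem_union z S) /\
  (exists u v, is_pair t u v) /\
  (forall s, s ∈ S -> exists x, x ∈ t /\ x ∈ s).

Definition mem_union_Pow12 (z BB : V) : Prop :=
  exists B, B ∈ BB /\ in_Pow12 B z.

Definition otimes_subpartition (Sigma Sstar : V) : Prop :=
  subsetV Sstar Sigma /\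
  exists BB, (forall B, B ∈ BB -> in_otimes Sigma Sigma B) /\
    (forall z, mem_union z Sstar <-> mem_union_Pow12 z BB).

Definition is_Sigma_otimes (Sigma So : V) : Prop :=
  otimes_subpartition Sigma So /\
  (forall Ss, otimes_subpartition Sigma Ss -> subsetV Ss So).

Definition is_Pi_otimes (Sigma So Po : V) : Prop :=
  (forall B, B ∈ Po -> in_otimes Sigma Sigma B) /\
  (forall z, mem_union z So <-> mem_union_Pow12 z Po).

(** ⊗-graphs with place set PS and target relation  T A q  ("q ∈ T(A)");
    nodes are the elements of PS ⊗ PS. *)
Definition is_node (PS A : V) : Prop := in_otimes PS PS A.

Definition source_place (PS : V) (T : V -> V -> Prop) (q : V) : Prop :=
  q ∈ PS /\ ~ (exists A, is_node PS A /\ T A q).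

Inductive accessible_place (PS : V) (T : V -> V -> Prop) : V -> Prop :=
| acc_source : forall q, source_place PS T q -> accessible_place PS T q
| acc_step : forall A q, is_node PS A ->
    (forall p, p ∈ A -> accessible_place PS T p) ->
    q ∈ PS -> T A q -> accessible_place PS T q.

Definition accessible_graph (PS : V) (T : V -> V -> Prop) : Prop :=
  forall q, q ∈ PS -> accessible_place PS T q.

Definition is_bijection_onto (PS Sigma : V) (bul : V -> V) : Prop :=
  (forall p p', p ∈ PS -> eqV p p' -> eqV (bul p) (bul p')) /\
  (forall p, p ∈ PS -> bul p ∈ Sigma) /\
  (forall p p', p ∈ PS -> p' ∈ PS -> eqV (bul p) (bul p') -> eqV p p') /\
  (forall s, s ∈ Sigma -> exists p, p ∈ PS /\ eqV (bul p) s).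

Definition is_image (bul : V -> V) (B X : V) : Prop :=
  forall z, z ∈ X <-> exists q, q ∈ B /\ eqV z (bul q).

Definition induced_target (PS So Po : V) (bul : V -> V) (B q : V) : Prop :=
  q ∈ PS /\ bul q ∈ So /\
  exists X, is_image bul B X /\ X ∈ Po /\
    exists t, t ∈ bul q /\ in_Pow12 X t.

From Stdlib Require Import Classical.

(* A place q that is the target of no node is a source place, hence
   accessible.  Otherwise q^(•) ∈ Σ_⊗, and we show by ∈-induction on t
   that every place q with q^(•) ∈ Σ_⊗ and t ∈ q^(•) is accessible.  Since
   t ∈ ⋃Σ_⊗ = ⋃Pow*_{1,2}[Π_⊗], there is a pair X = {u,v} ∈ Π_⊗ with
   t ∈ Pow*_{1,2}(X); pulling u, v back along the bijection gives a node
   B = {p_u, p_v} with B^(•) = X, and q ∈ T_Σ(B).  Each place p of B is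
   either a source, or p^(•) ∈ Σ_⊗ and t meets p^(•) (because t meets every
   member of X) in some x ∈ t, so p is accessible by induction on x.
   Hence q is accessible by the closure rule for the node B. *)

Lemma eqV_refl : forall x, eqV x x.
Proof. induction x as [A f IH]; simpl; split; intros a; exists a; apply IH. Qed.

Lemma eqV_sym : forall x y, eqV x y -> eqV y x.
Proof.
  induction x as [A f IH]; intros [B g]; simpl; intros [H1 H2]; split.
  - intros b; destruct (H2 b) as [a Ha]; exists a; apply IH; exact Ha.
  - intros a; destruct (H1 a) as [b Hb]; exists b; apply IH; exact Hb.
Qed.

Lemma eqV_trans : forall x y z, eqV x y -> eqV y z -> eqV x z.
Proof.
  induction x as [A f IH]; intros [B g] [C h]; simpl; intros [H1 H2] [K1 K2]; split.
  - intros a; destruct (H1 a) as [b Hb]; destruct (K1 b) as [c Hc]; exists c; eauto.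
  - intros c; destruct (K2 c) as [b Hb]; destruct (H2 b) as [a Ha]; exists a; eauto.
Qed.

Lemma mem_eqV_l : forall x y z, eqV x y -> x ∈ z -> y ∈ z.
Proof.
  intros x y [C h] E [c Hc]; exists c.
  eapply eqV_trans; [apply eqV_sym; exact E | exact Hc].
Qed.

Lemma mem_eqV_r : forall x y z, eqV y z -> x ∈ y -> x ∈ z.
Proof.
  intros x [A f] [B g] [H1 H2] [a Ha]; destruct (H1 a) as [b Hb]; exists b.
  eapply eqV_trans; eauto.
Qed.

Lemma mem_ind : forall P : V -> Prop,
  (forall t, (forall x, x ∈ t -> P x) -> P t) -> forall t, P t.
Proof.
  intros P H.
  assert (P_eqV : forall t t', eqV t' t -> P t').
  { induction t as [A f IH]; intros t' E; apply H; intros x Hx.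
    destruct (mem_eqV_r _ _ _ E Hx) as [a Ha]; eapply IH; exact Ha. }
  intros t; apply (P_eqV t), eqV_refl.
Qed.

Definition pairV (u v : V) : V := sup bool (fun b => if b then u else v).

Lemma pairV_spec : forall u v, is_pair (pairV u v) u v.
Proof.
  intros u v z; split.
  - intros [[|] Hz]; auto.
  - intros [Hz | Hz]; [exists true | exists false]; exact Hz.
Qed.

Lemma pairV_node : forall PS u v, u ∈ PS -> v ∈ PS -> is_node PS (pairV u v).
Proof. intros PS u v Hu Hv; exists u, v; repeat split; auto; apply pairV_spec. Qed.

Section Accessibility.
Variables (PS : V) (T : V -> V -> Prop).

Lemma accessible_of_target : forall q, q ∈ PS ->
  ((exists A, is_node PS A /\ T A q) -> accessible_place PS T q) ->
  accessible_place PS T q.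
Proof.
  intros q Hq Htarget.
  destruct (classic (exists A, is_node PS A /\ T A q)) as [Ht | Hsource].
  - exact (Htarget Ht).
  - apply acc_source; split; assumption.
Qed.

Hypothesis T_eqV : forall A q q', q ∈ PS -> eqV q q' -> T A q -> T A q'.

Lemma accessible_place_eqV : forall q q',
  accessible_place PS T q -> eqV q q' -> accessible_place PS T q'.
Proof.
  intros q q' Hacc; revert q'.
  induction Hacc as [q [Hq Hsource] | A q HA Hplaces IH Hq HT]; intros q' E.
  - apply acc_source; split; [eapply mem_eqV_l; eauto |].
    intros [A [HA HT]]; apply Hsource; exists A; split; [exact HA |].
    eapply T_eqV; [eapply mem_eqV_l; eauto | apply eqV_sym; exact E | exact HT].
  - eapply acc_step; [exact HA | exact Hplaces | eapply mem_eqV_l; eauto | eauto].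
Qed.

End Accessibility.

Section InducedGraph.
Variables (Sigma PS So Po : V) (bul : V -> V).
Hypothesis bul_eqV : forall p p', p ∈ PS -> eqV p p' -> eqV (bul p) (bul p').
Hypothesis bul_onto : forall s, s ∈ Sigma -> exists p, p ∈ PS /\ eqV (bul p) s.
Hypothesis Po_pairs : forall X, X ∈ Po -> in_otimes Sigma Sigma X.
Hypothesis So_covered : forall z, mem_union z So -> mem_union_Pow12 z Po.

Let T := induced_target PS So Po bul.

Lemma induced_target_eqV : forall A q q', q ∈ PS -> eqV q q' -> T A q -> T A q'.
Proof.
  intros A q q' Hq E [_ [HSo [X [HX [HPo [t [Ht HtX]]]]]]].
  assert (E' : eqV (bul q') (bul q)) by (apply eqV_sym, bul_eqV; auto).
  split; [eapply mem_eqV_l; eauto |]. split.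
  - eapply mem_eqV_l; [apply eqV_sym; exact E' | exact HSo].
  - exists X; split; [exact HX |]; split; [exact HPo |].
    exists t; split; [eapply mem_eqV_r; [apply eqV_sym; exact E' | exact Ht] | exact HtX].
Qed.

Lemma image_of_pulled_back_pair : forall pu pv u v X,
  pu ∈ PS -> pv ∈ PS -> eqV (bul pu) u -> eqV (bul pv) v -> is_pair X u v ->
  is_image bul (pairV pu pv) X.
Proof.
  intros pu pv u v X Hpu Hpv Eu Ev HX z; split.
  - intros Hz; destruct (proj1 (HX z) Hz) as [E | E];
      [exists pu; split; [exists true | eapply eqV_trans; [exact E | apply eqV_sym; exact Eu]]
      |exists pv; split; [exists false | eapply eqV_trans; [exact E | apply eqV_sym; exact Ev]]];
      apply eqV_refl.
  - intros [p [[[|] Hp] Ez]]; simpl in Hp; apply HX.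
    + left; apply (eqV_trans _ (bul p)); [exact Ez |].
      apply (eqV_trans _ (bul pu)); [| exact Eu].
      apply bul_eqV; [eapply mem_eqV_l; [apply eqV_sym; exact Hp | exact Hpu] | exact Hp].
    + right; apply (eqV_trans _ (bul p)); [exact Ez |].
      apply (eqV_trans _ (bul pv)); [| exact Ev].
      apply bul_eqV; [eapply mem_eqV_l; [apply eqV_sym; exact Hp | exact Hpv] | exact Hp].
Qed.

Lemma accessible_over_So : forall t q,
  q ∈ PS -> bul q ∈ So -> t ∈ bul q -> accessible_place PS T q.
Proof.
  intros t; induction t as [t IH] using mem_ind; intros q Hq HSo Ht.
  destruct (So_covered t (ex_intro _ (bul q) (conj HSo Ht))) as [X [HX HtX]].
  destruct (Po_pairs X HX) as [u [v [Hu [Hv Hpair]]]].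
  destruct (bul_onto u Hu) as [pu [Hpu Eu]].
  destruct (bul_onto v Hv) as [pv [Hpv Ev]].
  (* places over X are accessible: t meets their image if they are targets *)
  assert (places_over_X : forall p, p ∈ PS -> bul p ∈ X -> accessible_place PS T p).
  { intros p Hp HpX; apply accessible_of_target; [exact Hp |].
    intros [A [_ [_ [HSop _]]]].
    destruct (proj2 (proj2 HtX) (bul p) HpX) as [x [Hxt Hxp]].
    exact (IH x Hxt p Hp HSop Hxp). }
  assert (acc_pu : accessible_place PS T pu).
  { apply places_over_X; [exact Hpu |].
    eapply mem_eqV_l; [apply eqV_sym; exact Eu | apply Hpair; left; apply eqV_refl]. }
  assert (acc_pv : accessible_place PS T pv).
  { apply places_over_X; [exact Hpv |].
    eapply mem_eqV_l; [apply eqV_sym; exact Ev | apply Hpair; right; apply eqV_refl]. }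
  apply (acc_step PS T (pairV pu pv)); [apply pairV_node; assumption | | exact Hq |].
  - intros p Hp; destruct (proj1 (pairV_spec pu pv p) Hp) as [E | E];
      eapply accessible_place_eqV;
      [apply induced_target_eqV | exact acc_pu | apply eqV_sym; exact E
      |apply induced_target_eqV | exact acc_pv | apply eqV_sym; exact E].
  - split; [exact Hq |]; split; [exact HSo |].
    exists X; split; [eapply image_of_pulled_back_pair; eauto |]; split; [exact HX |].
    exists t; split; assumption.
Qed.

End InducedGraph.

Theorem mainTheorem10 :
  forall (Sigma PS : V) (bul : V -> V) (So Po : V),
    partition Sigma ->
    (forall x, x ∈ PS -> ~ in_otimes PS PS x) ->
    is_bijection_onto PS Sigma bul ->
    is_Sigma_otimes Sigma So ->
    is_Pi_otimes Sigma So Po ->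
    accessible_graph PS (induced_target PS So Po bul).
Proof.
  intros Sigma PS bul So Po _ _ [bul_eqV [_ [_ bul_onto]]] _ [Po_pairs Po_union] q Hq.
  apply accessible_of_target; [exact Hq |].
  intros [A [_ [_ [HSo [X [_ [_ [t [Ht _]]]]]]]]].
  apply (accessible_over_So Sigma PS So Po bul bul_eqV bul_onto Po_pairs
           (fun z => proj1 (Po_union z)) t q Hq HSo Ht).
Qed.
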